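(* Consider a finite reward-free MDP with occupancy polytope $\Phi$, let $\mathcal D=\{(d_e^k,\epsilon^k)\}_{k=1}^K$ with $d_e^k\in\Phi$, $\epsilon^k\ge0$, and let $\delta\ge0$. If $r\in\mathcal R_\delta(\mathcal D)$, then for every $d\in\Phi$, \[\mathrm{subopt}(r,d)\ge\delta\sum_{(s,a)\in\mathcal I_{\mathcal D}}d(s,a)-\min_{k\in[K]}\epsilon^k.\]
   Context: The MDP has finite $S$, $A$, transitions $P$, initial distribution $\mu_0$, discount $\gamma\in(0,1)$; $M\in\mathbb R^{|S|\times|S||A|}$ is given by $(Md)(s)=\sum_a d(s,a)-\gamma\sum_{s',a'}P(s\mid s',a')d(s',a')$ and $\Phi=\{d\ge0:Md=(1-\gamma)\mu_0\}$. Rewards are $r\in\Delta(S\times A)$. $\mathrm{subopt}(r,d):=\max_{\tilde d\in\Phi}r^\top\tilde d-r^\top d$. Let $\bar d:=\frac1K\sum_{k=1}^Kd_e^k$ and $\mathcal I_{\mathcal D}:=\{(s,a):\bar d(s,a)=0\}$. Define $\mathcal R_\delta(\mathcal D)$ as the set of $r\in\Delta(S\times A)$ for which there exists $v\in\mathbb R^{|S|}$ with $(1-\gamma)\mu_0^\top v-r^\top d_e^k\le\epsilon^k$ for all $k\in[K]$ and $(M^\top v-r)(s,a)\ge\delta\,\mathbf 1\{(s,a)\in\mathcal I_{\mathcal D}\}$ for all $(s,a)\in S\times A$. *)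

From HB Require Import structures.
From mathcomp Require Import all_boot all_order all_algebra.
From mathcomp Require Import classical_sets reals.
Set Implicit Arguments. Unset Strict Implicit. Unset Printing Implicit Defensive.
Import Order.TTheory GRing.Theory Num.Theory.
Local Open Scope ring_scope.
Local Open Scope classical_set_scope.

Section MDP.
Variables (R : realType) (S A : finType).

(* P s' a' s = probability of moving to s from (s', a'). *)
Definition is_transition (P : S -> A -> S -> R) : Prop :=
  (forall s' a' s, 0 <= P s' a' s) /\ (forall s' a', \sum_s P s' a' s = 1).

Definition is_distr (T : finType) (p : T -> R) : Prop :=
  (forall x, 0 <= p x) /\ \sum_x p x = 1.

Definition Mop (gamma : R) (P : S -> A -> S -> R) (d : S * A -> R) (s : S) : R :=
  \sum_a d (s, a) - gamma * \sum_(sa : S * A) P sa.1 sa.2 s * d sa.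

Definition MTop (gamma : R) (P : S -> A -> S -> R) (v : S -> R) (sa : S * A) : R :=
  v sa.1 - gamma * \sum_s' P sa.1 sa.2 s' * v s'.

Definition Phi (gamma : R) (P : S -> A -> S -> R) (mu0 : S -> R) : set (S * A -> R) :=
  [set d | (forall sa, 0 <= d sa) /\ forall s, Mop gamma P d s = (1 - gamma) * mu0 s].

Definition dotp (f g : S * A -> R) : R := \sum_sa f sa * g sa.

(* subopt(r,d) = max_{d~ in Phi} r^T d~ - r^T d (the max is the supremum, attained) *)
Definition subopt gamma P mu0 (r d : S * A -> R) : R :=
  sup [set dotp r dt | dt in Phi gamma P mu0] - dotp r d.

Definition dbar (K : nat) (de : 'I_K.+1 -> S * A -> R) (sa : S * A) : R :=
  (K.+1)%:R^-1 * \sum_k de k sa.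

Definition ID (K : nat) (de : 'I_K.+1 -> S * A -> R) : {pred S * A} :=
  fun sa => dbar de sa == 0.

Definition Rdelta gamma P mu0 (K : nat) (de : 'I_K.+1 -> S * A -> R)
    (eps : 'I_K.+1 -> R) (delta : R) : set (S * A -> R) :=
  [set r | is_distr r /\
     exists v : S -> R,
       (forall k, (1 - gamma) * \sum_s mu0 s * v s - dotp r (de k) <= eps k) /\
       (forall sa, MTop gamma P v sa - r sa >= delta * (sa \in ID de)%:R)].

Definition min_eps (K : nat) (eps : 'I_K.+1 -> R) : R :=
  \big[Num.min/eps ord0]_k eps k.

End MDP.

From HB Require Import structures.
From mathcomp Require Import all_boot all_order all_algebra.
From mathcomp Require Import classical_sets reals.
From mathcomp Require Import lra.
Import Order.TTheory GRing.Theory Num.Theory.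
Local Open Scope ring_scope.

(* Weak LP duality for the occupancy polytope.  For every d in Phi,
   <M^T v, d> = <v, M d> = (1 - gamma) <mu0, v> =: V, so the slack
   M^T v - r >= delta 1_I yields <r, d> + delta d(I) <= V.  On the other hand
   every expert d_e^k lies in Phi, hence max_Phi <r, .> >= <r, d_e^k> >= V - eps^k.
   Subtracting the two bounds gives the claim. *)

Section OccupancyDuality.
Context {R : realType} {S A : finType} {gamma : R} {P : S -> A -> S -> R}.

Lemma dotp_MTop (v : S -> R) (d : S * A -> R) :
  dotp (MTop gamma P v) d = \sum_s v s * Mop gamma P d s.
Proof.
rewrite /dotp /MTop /Mop.
under eq_bigr do rewrite mulrBl.
under [RHS]eq_bigr do rewrite mulrBr.
rewrite !sumrB; congr (_ - _).
  rewrite (eq_bigr (fun sa => v sa.1 * d (sa.1, sa.2))); last by case.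
  rewrite -(pair_bigA _ (fun s a => v s * d (s, a))) /=.
  by apply: eq_bigr => s _; rewrite mulr_sumr.
under eq_bigr do rewrite -mulrA mulr_suml.
under [RHS]eq_bigr do rewrite mulrCA mulr_sumr.
rewrite -!mulr_sumr exchange_big /=; congr (_ * _).
apply: eq_bigr => s _; apply: eq_bigr => sa _.
by rewrite mulrCA mulrA [_ * v s]mulrC.
Qed.

Context {mu0 : S -> R}.

Lemma dotp_MTop_Phi (v : S -> R) {d : S * A -> R} :
  Phi gamma P mu0 d -> dotp (MTop gamma P v) d = (1 - gamma) * \sum_s mu0 s * v s.
Proof.
move=> [_ dM]; rewrite dotp_MTop mulr_sumr.
by apply: eq_bigr => s _; rewrite dM mulrC -mulrA.
Qed.

Lemma dotp_add_slack_le {r c : S * A -> R} {v : S -> R} {d : S * A -> R} :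
  (forall sa, c sa <= MTop gamma P v sa - r sa) -> Phi gamma P mu0 d ->
  dotp r d + dotp c d <= (1 - gamma) * \sum_s mu0 s * v s.
Proof.
move=> slack dPhi; rewrite -(dotp_MTop_Phi v dPhi) /dotp -big_split /=.
apply: ler_sum => sa _; rewrite -mulrDl.
by apply: ler_wpM2r; [case: dPhi | have := slack sa; lra].
Qed.

Lemma dotp_le_dual_value {r : S * A -> R} {v : S -> R} {d : S * A -> R} :
  (forall sa, r sa <= MTop gamma P v sa) -> Phi gamma P mu0 d ->
  dotp r d <= (1 - gamma) * \sum_s mu0 s * v s.
Proof.
move=> r_le dPhi.
have slack0 sa : 0 <= MTop gamma P v sa - r sa by rewrite subr_ge0.
have dotp0 : dotp (fun=> 0) d = 0 by rewrite /dotp big1 // => sa _; rewrite mul0r.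
by have := dotp_add_slack_le slack0 dPhi; rewrite dotp0 addr0.
Qed.

End OccupancyDuality.

Lemma dotp_scaled_indicator (R : realType) (S A : finType)
    (I : {pred S * A}) (delta : R) (d : S * A -> R) :
  dotp (fun sa => delta * (sa \in I)%:R) d = delta * \sum_(sa | sa \in I) d sa.
Proof.
rewrite /dotp mulr_sumr [RHS]big_mkcond /=; apply: eq_bigr => sa _.
by case: (sa \in I); rewrite ?mulr1 ?mulr0 ?mul0r.
Qed.

Theorem mainTheorem10 (R : realType) (S A : finType)
  (P : S -> A -> S -> R) (mu0 : S -> R) (gamma : R)
  (hP : is_transition P) (hmu0 : is_distr mu0)
  (hg0 : 0 < gamma) (hg1 : gamma < 1)
  (K : nat) (de : 'I_K.+1 -> S * A -> R) (eps : 'I_K.+1 -> R) (delta : R)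
  (hde : forall k, Phi gamma P mu0 (de k))
  (heps : forall k, 0 <= eps k) (hdelta : 0 <= delta)
  (r : S * A -> R) (hr : Rdelta gamma P mu0 de eps delta r) :
  forall d : S * A -> R, Phi gamma P mu0 d ->
    subopt gamma P mu0 r d >=
      delta * (\sum_(sa | sa \in ID de) d sa) - min_eps eps.
Proof.
move=> d dPhi; case: hr => _ [v [expert_gap slack]].
have r_le sa : r sa <= MTop gamma P v sa.
  by rewrite -subr_ge0; apply: le_trans (slack sa); rewrite mulr_ge0 ?ler0n.
have value_bounded : has_ubound [set dotp r dt | dt in Phi gamma P mu0].
  by exists ((1 - gamma) * \sum_s mu0 s * v s) => _ [dt dtPhi <-]; apply: dotp_le_dual_value.
have opt_ge k : dotp r (de k) <= sup [set dotp r dt | dt in Phi gamma P mu0].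
  by apply: ub_le_sup => //; exists (de k).
have := dotp_add_slack_le slack dPhi.
rewrite dotp_scaled_indicator /subopt /min_eps => d_le.
have gap_le_min : (1 - gamma) * \sum_s mu0 s * v s
    - sup [set dotp r dt | dt in Phi gamma P mu0] <= \big[Num.min/eps ord0]_k eps k.
  apply: le_bigmin => [|k _]; last by have := expert_gap k; have := opt_ge k; lra.
  by have := expert_gap ord0; have := opt_ge ord0; lra.
lra.
Qed.
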